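(* Let $F:\mathbb{R}^n\to\mathbb{R}$ be convex and $1$-smooth, let $x^\star$ be a minimizer of $F$ and $F^\star=F(x^\star)$. Let $k\ge1$, $N=2^k-1$, and let $(h_0,\dots,h_{N-1})=\pi_k$ be the silver stepsize schedule. Let $x^0\in\mathbb{R}^n$ and $x^{i+1}=x^i-h_i\nabla F(x^i)$ for $i=0,\dots,N-1$. Then, with $\rho=1+\sqrt2$ and writing $Q_i=F^\star-F(x^i)-\langle\nabla F(x^i),x^\star-x^i\rangle-\tfrac12\|\nabla F(x^i)\|^2$, $$(2\rho^k-1)\big(F^\star-F(x^N)\big)+\tfrac12\|x^0-x^\star\|^2-\sum_{i=0}^{N-1}h_iQ_i-\rho^kQ_N-\tfrac12\big\|x^N-\rho^k\nabla F(x^N)-x^\star\big\|^2\ge0.$$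
   Context: A differentiable convex function $F$ is $1$-smooth if $\nabla F$ is $1$-Lipschitz (equivalently $\nabla F$ is $1$-cocoercive). The silver ratio is $\rho=1+\sqrt2$. The silver stepsize schedule $\pi_k\in\mathbb{R}^{2^k-1}$ is defined recursively by $\pi_1=(\sqrt2)$ and $\pi_{k+1}=(\pi_k,\ 1+\rho^{k-1},\ \pi_k)$ (concatenation). *)

From HB Require Import structures.
From mathcomp Require Import all_boot all_order all_algebra.
From mathcomp Require Import all_classical all_reals all_analysis.
Set Implicit Arguments. Unset Strict Implicit. Unset Printing Implicit Defensive.
Import Order.TTheory GRing.Theory Num.Theory.
Import numFieldNormedType.Exports.
Local Open Scope ring_scope.

Definition dotv {R : realType} {n : nat} (u v : 'rV[R]_n) : R :=
  \sum_(i < n) u ord0 i * v ord0 i.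
Definition enorm {R : realType} {n : nat} (u : 'rV[R]_n) : R :=
  Num.sqrt (dotv u u).

Definition is_gradient {R : realType} {n : nat}
  (F : 'rV[R]_n -> R) (g : 'rV[R]_n -> 'rV[R]_n) : Prop :=
  forall x, differentiable F x /\ forall h, ('d F x : 'rV[R]_n -> R) h = dotv (g x) h.

Definition convex_fun {R : realType} {n : nat} (F : 'rV[R]_n -> R) : Prop :=
  forall x y (t : R), 0 <= t -> t <= 1 ->
    F ((1 - t) *: x + t *: y) <= (1 - t) * F x + t * F y.

Definition one_smooth {R : realType} {n : nat} (g : 'rV[R]_n -> 'rV[R]_n) : Prop :=
  forall x y, enorm (g x - g y) <= enorm (x - y).

Definition silver_ratio {R : realType} : R := 1 + Num.sqrt 2.

(* silver stepsize schedule pi_k (pi_0 := [::], unused) *)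
Fixpoint silver {R : realType} (k : nat) : seq R :=
  match k with
  | 0 => [::]
  | 1 => [:: Num.sqrt 2]
  | k'.+1 => silver k' ++ (1 + silver_ratio ^+ (k'.-1)) :: silver k'
  end.

Fixpoint gd_iter {R : realType} {n : nat} (g : 'rV[R]_n -> 'rV[R]_n)
  (hs : seq R) (x0 : 'rV[R]_n) (i : nat) : 'rV[R]_n :=
  match i with
  | 0 => x0
  | i'.+1 => let x := gd_iter g hs x0 i' in x - nth 0 hs i' *: g x
  end.

From HB Require Import structures.
From mathcomp Require Import all_boot all_order all_algebra.
From mathcomp Require Import all_classical all_reals all_analysis.
From mathcomp Require Import ring lra zify.
Import Order.TTheory GRing.Theory Num.Theory.
Import numFieldNormedType.Exports.
Local Open Scope ring_scope.

(* Following Altschuler and Parrilo, generalize the expression of the theorem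
   (the "certificate") to any schedule, final coefficient, starting point and
   reference pair (z, phi) in place of (xstar, F xstar).  For the recursion
   pi_(k+1) = (pi_k, 1 + rho^(k-1), pi_k), the certificate of pi_(k+1) equals,
   as a polynomial identity using only rho^2 = 2 rho + 1 and
   sum pi_k = rho^k - 1, the certificate of the first half plus rho^2 times the
   certificate of the second half relative to the reference pair
   (x - g x, F x - |g x|^2 / 2) taken at the junction point x, plus
   nonnegative multiples of cocoercivity gaps.  Those gaps are nonnegative for
   convex 1-smooth functions, so the certificate is nonnegative by induction. *)

Section InnerProduct.
Context {R : realType} {n : nat}.
Implicit Types u v w : 'rV[R]_n.

Definition sqnorm u := dotv u u.

Lemma dotvC u v : dotv u v = dotv v u.
Proof. by apply: eq_bigr => i _; rewrite mulrC. Qed.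

Lemma dotvDl u v w : dotv (u + v) w = dotv u w + dotv v w.
Proof. by rewrite /dotv -big_split; apply: eq_bigr => i _; rewrite !mxE mulrDl. Qed.

Lemma dotvDr u v w : dotv w (u + v) = dotv w u + dotv w v.
Proof. by rewrite dotvC dotvDl !(dotvC w). Qed.

Lemma dotvZl a u v : dotv (a *: u) v = a * dotv u v.
Proof. by rewrite /dotv mulr_sumr; apply: eq_bigr => i _; rewrite !mxE mulrA. Qed.

Lemma dotvZr a u v : dotv u (a *: v) = a * dotv u v.
Proof. by rewrite dotvC dotvZl dotvC. Qed.

Lemma dotvNl u v : dotv (- u) v = - dotv u v.
Proof. by rewrite -scaleN1r dotvZl mulN1r. Qed.

Lemma dotvNr u v : dotv u (- v) = - dotv u v.
Proof. by rewrite dotvC dotvNl dotvC. Qed.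

Lemma dotvBl u v w : dotv (u - v) w = dotv u w - dotv v w.
Proof. by rewrite dotvDl dotvNl. Qed.

Lemma dotvBr u v w : dotv w (u - v) = dotv w u - dotv w v.
Proof. by rewrite dotvDr dotvNr. Qed.

Lemma dotv0l v : dotv 0 v = 0.
Proof. by rewrite -(scale0r 0) dotvZl mul0r. Qed.

Lemma dotv_suml (I : Type) (r : seq I) (P : pred I) (u : I -> 'rV[R]_n) v :
  dotv (\sum_(i <- r | P i) u i) v = \sum_(i <- r | P i) dotv (u i) v.
Proof.
elim/big_rec2: _ => [|i y1 y2 _ <-]; first exact: dotv0l.
by rewrite dotvDl.
Qed.

Lemma sqnorm_ge0 u : 0 <= sqnorm u.
Proof. by apply: sumr_ge0 => i _; rewrite -expr2 sqr_ge0. Qed.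

Lemma sqnormBZ a u v :
  sqnorm (u - a *: v) = sqnorm u - 2 * a * dotv u v + a ^+ 2 * sqnorm v.
Proof. rewrite /sqnorm !(dotvBl, dotvBr, dotvZl, dotvZr) (dotvC v u); ring. Qed.

Lemma enorm_sqr u : enorm u ^+ 2 = sqnorm u.
Proof. by rewrite sqr_sqrtr // sqnorm_ge0. Qed.

Lemma ler_enorm_sqnorm u v : enorm u <= enorm v -> sqnorm u <= sqnorm v.
Proof. by rewrite /enorm ler_sqrt // sqnorm_ge0. Qed.

End InnerProduct.

Section SmoothConvex.
Local Open Scope classical_set_scope.
Context {R : realType} {n : nat} (F : 'rV[R]_n -> R) (g : 'rV[R]_n -> 'rV[R]_n).
Hypotheses (gradF : is_gradient F g) (smooth_g : one_smooth g).

Lemma is_derive_along_line (x d : 'rV[R]_n) (t : R) :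
  is_derive t 1 (fun s : R => F (s *: d + x)) (dotv (g (t *: d + x)) d).
Proof.
have quotE :
    (fun h : R => h^-1 *: (((fun s : R => F (s *: d + x)) \o shift t) (h *: 1)
                           - F (t *: d + x)))
    = (fun h : R => h^-1 *: ((F \o shift (t *: d + x)) (h *: d) - F (t *: d + x))).
  apply/funext => h /=; congr (_ *: (F _ - _)).
  by rewrite [h%:A]mulr1 scalerDl addrA.
have [dF gradE] := gradF (t *: d + x).
have dv : derivable F (t *: d + x) d by exact: diff_derivable.
apply: DeriveDef; first by rewrite /derivable quotE.
by rewrite /derive quotE -/(derive F _ _) deriveE // gradE.
Qed.

(* Mean value theorem for psi t = F (t d + x) - t <g x, d> - t^2 |d|^2 / 2, whose
   derivative <g (t d + x) - g x, d> - t |d|^2 is nonpositive on [0, 1] by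
   the Lipschitz bound on g. *)
Lemma smooth_upper_bound x d :
  F (d + x) <= F x + dotv (g x) d + 2^-1 * sqnorm d.
Proof.
set c1 := dotv (g x) d; set c2 := sqnorm d.
pose psi (t : R) := F (t *: d + x) - (c1 * t + (2^-1 * c2) * (t * t)).
pose dpsi (s : R) := dotv (g (s *: d + x)) d
  - (c1 *: (1 : R) + (2^-1 * c2) *: (s *: (1 : R) + s *: (1 : R))).
have psi' (s : R) : is_derive s (1 : R) psi (dpsi s).
  by apply: is_deriveB; apply: is_derive_along_line.
have psi_cont : {within `[0, 1], continuous psi}.
  apply: continuous_subspaceT => s; apply: differentiable_continuous.
  by apply/derivable1_diffP; exact: (@ex_derive _ _ _ _ _ _ _ (psi' s)).
have [c /[!in_itv] /= /andP[c_gt0 c_lt1] psi_mvt] :=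
  MVT ltr01 (fun s _ => psi' s) psi_cont.
have dpsi_le0 : dpsi c <= 0.
  have -> : dpsi c = dotv (g (c *: d + x) - g x) d - c * c2.
    by rewrite /dpsi dotvBl -/c1 /GRing.scale /= !mulr1; lra.
  set e := g (c *: d + x) - g x.
  have e_le : sqnorm e <= c ^+ 2 * c2.
    move: (smooth_g (c *: d + x) x) => /ler_enorm_sqnorm.
    by rewrite addrK /sqnorm dotvZl dotvZr mulrA -expr2.
  have := sqnorm_ge0 (e - c *: d); rewrite sqnormBZ -/c2.
  clearbody e; nra.
have : psi 1 - psi 0 <= 0 by rewrite psi_mvt subr0 mulr1.
rewrite /psi scale1r scale0r add0r !mul0r !mulr0 !addr0 mulr1 subr0; lra.
Qed.

Hypothesis convF : convex_fun F.

(* Convexity on [x, y] and the upper bound at the point t (y - x) + x give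
   <g x, y - x> <= F y - F x + 3/2 t |y - x|^2 for t in (0, 1]; let t -> 0. *)
Lemma convex_gradient_ineq x y : F x + dotv (g x) (y - x) <= F y.
Proof.
set d := y - x; set N := sqnorm d; set G0 := dotv (g x) d.
have N_ge0 : 0 <= N by exact: sqnorm_ge0.
have small_t t : 0 < t -> t <= 1 -> G0 <= F y - F x + 3 / 2 * t * N.
  move=> t_gt0 t_le1; set p := t *: d + x.
  have conv_p : F p <= (1 - t) * F x + t * F y.
    have -> : p = (1 - t) *: x + t *: y.
      by rewrite /p /d scalerBr scalerBl scale1r addrAC [RHS]addrC addrA.
    exact: convF (ltW t_gt0) t_le1.
  have ub := smooth_upper_bound p (- (t *: d)).
  rewrite /p addKr /sqnorm dotvNr dotvNl dotvNr opprK !dotvZl !dotvZr in ub.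
  rewrite -/(sqnorm d) -/N -/p in ub.
  set e := g p - g x.
  have gpE : dotv (g p) d = dotv e d + G0 by rewrite /e dotvBl /G0 subrK.
  have e_le : sqnorm e <= t ^+ 2 * N.
    move: (smooth_g p x) => /ler_enorm_sqnorm.
    by rewrite /p addrK /sqnorm dotvZl dotvZr mulrA -expr2.
  have := sqnorm_ge0 (e - (- t) *: d); rewrite sqnormBZ -/N sqrrN.
  rewrite gpE in ub; clearbody e; nra.
apply/ler_addgt0Pr => eps eps_gt0.
have den_gt0 : 0 < eps + 2 * N by lra.
set t := eps / (eps + 2 * N).
have t_gt0 : 0 < t by rewrite divr_gt0.
have tE : t * (eps + 2 * N) = eps by rewrite divfK // gt_eqF.
have t_le1 : t <= 1 by rewrite ler_pdivrMr // mul1r; lra.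
have := small_t t t_gt0 t_le1; nra.
Qed.

(* The upper bound at y with step g x - g y, combined with the gradient
   inequality at x towards the resulting point. *)
Lemma smooth_convex_cocoercive x y :
  F x + dotv (g x) (y - x) + 2^-1 * sqnorm (g y - g x) <= F y.
Proof.
set D := g y - g x.
have ub := smooth_upper_bound y (- D).
have lb := convex_gradient_ineq x (- D + y).
rewrite /sqnorm dotvNr dotvNl dotvNr opprK -/(sqnorm D) in ub.
rewrite -addrA dotvDr dotvNr in lb.
have : dotv (g y) D - dotv (g x) D = sqnorm D by rewrite -dotvBl.
lra.
Qed.

End SmoothConvex.

Section Certificate.
Context {R : realType} {n : nat} (F : 'rV[R]_n -> R) (g : 'rV[R]_n -> 'rV[R]_n).
Local Notation vec := 'rV[R]_n.

Definition cocoercivity_gap (u v : vec) : R :=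
  F u - F v - dotv (g v) (u - v) - 2^-1 * sqnorm (g u - g v).

(* The gap Q_{*,v} relative to a virtual stationary point z with value phi. *)
Definition optimum_gap (z : vec) (phi : R) (v : vec) : R :=
  phi - F v - dotv (g v) (z - v) - 2^-1 * sqnorm (g v).

Definition certificate (s : seq R) (a : R) (y0 z : vec) (phi : R) : R :=
  (2 * a - 1) * (phi - F (gd_iter g s y0 (size s))) + 2^-1 * sqnorm (y0 - z)
  - \sum_(0 <= i < size s) nth 0 s i * optimum_gap z phi (gd_iter g s y0 i)
  - a * optimum_gap z phi (gd_iter g s y0 (size s))
  - 2^-1 * sqnorm (gd_iter g s y0 (size s) - a *: g (gd_iter g s y0 (size s)) - z).

Lemma cocoercivity_gapE u v :
  cocoercivity_gap u v = optimum_gap (u - g u) (F u - 2^-1 * sqnorm (g u)) v.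
Proof.
rewrite /cocoercivity_gap /optimum_gap /sqnorm !(dotvBl, dotvBr) (dotvC (g u) (g v)).
lra.
Qed.

Lemma sum_optimum_gap_rebase z phi z' phi' m N (w : nat -> R) (x : nat -> vec) :
  \sum_(m <= i < N) w i * optimum_gap z' phi' (x i) =
  \sum_(m <= i < N) w i * optimum_gap z phi (x i)
  + (\sum_(m <= i < N) w i) * (phi' - phi)
  - dotv (\sum_(m <= i < N) w i *: g (x i)) (z' - z).
Proof.
rewrite dotv_suml mulr_suml -!big_split -sumrB /=.
apply: eq_bigr => i _.
rewrite /optimum_gap dotvZl !dotvBr; ring.
Qed.

Lemma gd_iter_cat_prefix s c s' y0 i : (i <= size s)%N ->
  gd_iter g (s ++ c :: s') y0 i = gd_iter g s y0 i.
Proof.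
elim: i => [//|i IH] i_lt /=.
by rewrite IH ?(ltnW i_lt) // nth_cat i_lt.
Qed.

Lemma nth_cat_suffix (s s' : seq R) c t :
  nth 0 (s ++ c :: s') (t + (size s).+1) = nth 0 s' t.
Proof.
rewrite nth_cat.
have -> : (t + (size s).+1 < size s)%N = false by lia.
by have -> : (t + (size s).+1 - size s = t.+1)%N by lia.
Qed.

Lemma gd_iter_cat_suffix s c s' y0 t :
  let xM := gd_iter g s y0 (size s) in
  gd_iter g (s ++ c :: s') y0 (t + (size s).+1) = gd_iter g s' (xM - c *: g xM) t.
Proof.
elim: t => [|t /= ->].
  by rewrite add0n /= gd_iter_cat_prefix // nth_cat ltnn subnn.
by rewrite nth_cat_suffix.
Qed.

Lemma gd_iter_telescope s y0 N :
  gd_iter g s y0 N = y0 - \sum_(0 <= i < N) nth 0 s i *: g (gd_iter g s y0 i).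
Proof.
elim: N => [|N IH]; first by rewrite big_geq // subr0.
by rewrite big_nat_recr //= IH opprD addrA.
Qed.

Lemma certificate_cat s c a y0 z phi :
  let xM := gd_iter g s y0 (size s) in
  let x' := gd_iter g s (xM - c *: g xM) in
  certificate (s ++ c :: s) a y0 z phi =
    (2 * a - 1) * (phi - F (x' (size s))) + 2^-1 * sqnorm (y0 - z)
    - \sum_(0 <= i < size s) nth 0 s i * optimum_gap z phi (gd_iter g s y0 i)
    - c * optimum_gap z phi xM
    - \sum_(0 <= i < size s) nth 0 s i * optimum_gap z phi (x' i)
    - a * optimum_gap z phi (x' (size s))
    - 2^-1 * sqnorm (x' (size s) - a *: g (x' (size s)) - z).
Proof.
move=> xM x'; set M := size s.
have iter_suffix t : gd_iter g (s ++ c :: s) y0 (t + M.+1) = x' t.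
  exact: gd_iter_cat_suffix.
have sum_cat :
    \sum_(0 <= i < M + M.+1) nth 0 (s ++ c :: s) i
                             * optimum_gap z phi (gd_iter g (s ++ c :: s) y0 i) =
    \sum_(0 <= i < M) nth 0 s i * optimum_gap z phi (gd_iter g s y0 i)
    + c * optimum_gap z phi xM
    + \sum_(0 <= i < M) nth 0 s i * optimum_gap z phi (x' i).
  rewrite (big_cat_nat _ (n := M)) ?leq_addr // (big_ltn (m := M)) ?leq_addl //.
  rewrite -{1}(add0n M.+1) big_addn addnK nth_cat ltnn subnn gd_iter_cat_prefix //.
  rewrite -addrA; congr (_ + (_ + _)).
  - apply: eq_big_nat => i /andP[_ i_lt].
    by rewrite nth_cat i_lt gd_iter_cat_prefix ?(ltnW i_lt).
  - by apply: eq_big_nat => i _; rewrite nth_cat_suffix iter_suffix.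
rewrite /certificate size_cat /= -/M iter_suffix sum_cat.
ring.
Qed.

Lemma certificate_step s r b y0 z phi :
  r ^+ 2 = 2 * r + 1 -> \sum_(0 <= i < size s) nth 0 s i = r * b - 1 ->
  let xM := gd_iter g s y0 (size s) in
  let x' := gd_iter g s (xM - (1 + b) *: g xM) in
  certificate (s ++ (1 + b) :: s) (r * (r * b)) y0 z phi =
    certificate s (r * b) y0 z phi
    + r ^+ 2 * certificate s (r * b) (xM - (1 + b) *: g xM)
                 (xM - g xM) (F xM - 2^-1 * sqnorm (g xM))
    + r * \sum_(0 <= i < size s) nth 0 s i
            * (cocoercivity_gap xM (x' i) + cocoercivity_gap (x' (size s)) (x' i))
    + r * cocoercivity_gap xM (x' (size s))
    + r * b * cocoercivity_gap (x' (size s)) xM.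
Proof.
move=> r_sqr sum_s xM x'; set M := size s.
rewrite certificate_cat -/xM -/x' /certificate -/M -/x'.
under [X in _ = _ + _ + r * X + _ + _]eq_big_nat => i _ do
  rewrite mulrDr !cocoercivity_gapE.
rewrite big_split /=.
rewrite !(sum_optimum_gap_rebase z phi (xM - g xM)).
rewrite !(sum_optimum_gap_rebase z phi (x' M - g (x' M))).
have tele : \sum_(0 <= i < M) nth 0 s i *: g (x' i) = xM - (1 + b) *: g xM - x' M.
  by rewrite /x' (gd_iter_telescope s _ M) opprB addrCA subrr addr0.
rewrite sum_s tele -/xM.
set S1 := \sum_(0 <= i < M) _. set S2 := \sum_(0 <= i < M) _.
set xN := x' M; clearbody S1 S2 xN xM.
rewrite /cocoercivity_gap /optimum_gap /sqnorm.
rewrite ?(dotvDl, dotvDr, dotvBl, dotvBr, dotvZl, dotvZr, dotvNl, dotvNr).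
rewrite ?(dotvC z y0) ?(dotvC xM y0) ?(dotvC (g xM) y0) ?(dotvC xN y0)
  ?(dotvC (g xN) y0) ?(dotvC xM z) ?(dotvC (g xM) z) ?(dotvC xN z)
  ?(dotvC (g xN) z) ?(dotvC (g xM) xM) ?(dotvC xN xM) ?(dotvC (g xN) xM)
  ?(dotvC xN (g xM)) ?(dotvC (g xN) (g xM)) ?(dotvC (g xN) xN).
by field: r_sqr.
Qed.

Lemma certificate_single h y0 z phi : h ^+ 2 = 2 ->
  let x1 := y0 - h *: g y0 in
  certificate [:: h] (1 + h) y0 z phi =
    (1 + h) * cocoercivity_gap y0 x1 + cocoercivity_gap x1 y0.
Proof.
move=> h_sqr x1; rewrite /certificate /= big_nat1 /= -/x1.
rewrite /cocoercivity_gap /optimum_gap /sqnorm /x1.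
rewrite ?(dotvDl, dotvDr, dotvBl, dotvBr, dotvZl, dotvZr, dotvNl, dotvNr).
rewrite ?(dotvC z y0) ?(dotvC (g y0) y0) ?(dotvC (g x1) y0) ?(dotvC (g y0) z)
  ?(dotvC (g x1) z) ?(dotvC (g x1) (g y0)).
by field: h_sqr.
Qed.
End Certificate.

Section SilverSchedule.
Context {R : realType}.
Local Notation rho := (@silver_ratio R).

Lemma silverSS k : silver (R := R) k.+2 = silver k.+1 ++ (1 + rho ^+ k) :: silver k.+1.
Proof. by []. Qed.

Lemma silver_ratio_ge0 : 0 <= rho.
Proof. by rewrite addr_ge0 // sqrtr_ge0. Qed.

Lemma sqr_sqrt2 : Num.sqrt 2 ^+ 2 = 2 :> R.
Proof. by rewrite sqr_sqrtr // ler0n. Qed.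

Lemma silver_ratio_sqr : rho ^+ 2 = 2 * rho + 1.
Proof. by have := sqr_sqrt2; rewrite /silver_ratio => sqrt2_sqr; ring: sqrt2_sqr. Qed.

Lemma size_silver k : size (silver (R := R) k.+1) = (2 ^ k.+1 - 1)%N.
Proof.
elim: k => [//|k IH]; rewrite silverSS size_cat /= IH.
by have := expn_gt0 2 k.+1; rewrite (expnS 2 k.+1); lia.
Qed.

Lemma sum_silver k :
  \sum_(0 <= i < size (silver (R := R) k.+1)) nth 0 (silver k.+1) i = rho ^+ k.+1 - 1.
Proof.
rewrite -(big_nth 0 predT id).
elim: k => [|k IH]; first by rewrite big_seq1 expr1 /silver_ratio addrC addKr.
rewrite silverSS big_cat big_cons IH !exprS /=.
by have := silver_ratio_sqr => rho_sqr; ring: rho_sqr.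
Qed.

Lemma nth_silver_ge0 k i : 0 <= nth 0 (silver (R := R) k.+1) i.
Proof.
have mem_ge0 x : x \in silver (R := R) k.+1 -> 0 <= x.
  elim: k x => [|k IH] x; first by rewrite inE => /eqP ->; rewrite sqrtr_ge0.
  rewrite silverSS mem_cat in_cons => /orP [/IH //|/orP [/eqP ->|/IH //]].
  by rewrite addr_ge0 // exprn_ge0 // silver_ratio_ge0.
have [i_lt|i_ge] := ltnP i (size (silver (R := R) k.+1)).
  by rewrite mem_ge0 // mem_nth.
by rewrite nth_default.
Qed.

End SilverSchedule.

Section SilverCertificate.
Context {R : realType} {n : nat} (F : 'rV[R]_n -> R) (g : 'rV[R]_n -> 'rV[R]_n).
Hypotheses (gradF : is_gradient F g) (convF : convex_fun F) (smooth_g : one_smooth g).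

Lemma cocoercivity_gap_ge0 u v : 0 <= cocoercivity_gap F g u v.
Proof.
have := smooth_convex_cocoercive F g gradF smooth_g convF v u.
rewrite /cocoercivity_gap; lra.
Qed.

Lemma silver_certificate_ge0 k y0 z phi :
  0 <= certificate F g (silver k.+1) (silver_ratio ^+ k.+1) y0 z phi.
Proof.
have rho_ge0 := silver_ratio_ge0 (R := R).
elim: k y0 z phi => [|k IH] y0 z phi.
  rewrite expr1 /= (certificate_single F g _ _ _ _ sqr_sqrt2).
  by rewrite addr_ge0 // ?mulr_ge0 ?cocoercivity_gap_ge0.
have sum_s := sum_silver (R := R) k; rewrite exprS in sum_s.
rewrite silverSS !exprS (certificate_step F g _ _ _ _ _ _ silver_ratio_sqr sum_s) -!exprS.
apply: addr_ge0; first apply: addr_ge0; first apply: addr_ge0.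
- by rewrite addr_ge0 ?IH // mulr_ge0 ?exprn_ge0 ?IH.
- rewrite mulr_ge0 // sumr_ge0 // => i _.
  by apply: mulr_ge0; [exact: nth_silver_ge0 | rewrite addr_ge0 ?cocoercivity_gap_ge0].
- by rewrite mulr_ge0 ?cocoercivity_gap_ge0.
- by rewrite !mulr_ge0 ?exprn_ge0 ?cocoercivity_gap_ge0.
Qed.

End SilverCertificate.

Theorem lemma1 (R : realType) (n : nat) (F : 'rV[R]_n -> R) (g : 'rV[R]_n -> 'rV[R]_n)
  (xstar : 'rV[R]_n) (k : nat) (x0 : 'rV[R]_n) :
  is_gradient F g -> convex_fun F -> one_smooth g ->
  (forall y, F xstar <= F y) ->
  (1 <= k)%N ->
  let rho : R := silver_ratio in
  let N := (2 ^ k - 1)%N in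
  let h : seq R := silver k in
  let x := gd_iter g h x0 in
  let Fs := F xstar in
  let Q := fun i => Fs - F (x i) - dotv (g (x i)) (xstar - x i)
                    - 2^-1 * enorm (g (x i)) ^+ 2 in
  0 <= (2 * rho ^+ k - 1) * (Fs - F (x N)) + 2^-1 * enorm (x0 - xstar) ^+ 2
       - \sum_(i < N) nth 0 h i * Q i - rho ^+ k * Q N
       - 2^-1 * enorm (x N - rho ^+ k *: g (x N) - xstar) ^+ 2.
Proof.
(* The certificate is nonnegative for every reference pair. *)
move=> gradF convF smooth_g _ /ltn_predK <-; cbv zeta.
rewrite -(size_silver (R := R)) !enorm_sqr.
under eq_bigr => i _ do rewrite enorm_sqr.
have := silver_certificate_ge0 F g gradF convF smooth_g k.-1 x0 xstar (F xstar).
by rewrite /certificate big_mkord.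
Qed.
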